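(* Let $A=(a_{nk})$ be a nonnegative regular summability matrix and let $(q_n)_{n\in\mathbb{N}}$ be a sequence with $0<q_n<1$ for all $n$, $st_A\text{-}\lim_n q_n^{\,n}=1$ and $st_A\text{-}\lim_n \frac{1}{[n]_{q_n}}=0$. Then for every continuous $f:[0,1]\to\mathbb{R}_+$, $$st_A\text{-}\lim_n\left(\sup_{x\in[0,1]}\left|B^{(M)}_{n,q_n}(f)(x)-f(x)\right|\right)=0.$$
   Context: For $q\in(0,1)$ and a nonnegative integer $m$, $[m]_q=\frac{1-q^m}{1-q}$; $[m]_q!=[m]_q[m-1]_q\cdots[1]_q$ for $m\ge1$, $[0]_q!=1$; $\left[\begin{smallmatrix} n\\ k\end{smallmatrix}\right]_q=\frac{[n]_q!}{[k]_q![n-k]_q!}$. For $x\in[0,1]$, $p_{n,k}(x;q)=\left[\begin{smallmatrix} n\\ k\end{smallmatrix}\right]_q x^k\prod_{s=0}^{n-k-1}(1-q^s x)$, and $$B^{(M)}_{n,q}(f)(x)=\frac{\bigvee_{k=0}^{n}p_{n,k}(x;q)\,f\!\left(\frac{[k]_q}{[n]_q}\right)}{\bigvee_{k=0}^{n}p_{n,k}(x;q)},$$ with $\bigvee$ the maximum. A matrix $A=(a_{nk})$ is regular if $\lim_n\sum_k a_{nk}x_k=L$ whenever $\lim_k x_k=L$. For a nonnegative regular $A$, a real sequence $(x_k)$ is $A$-statistically convergent to $L$, written $st_A\text{-}\lim x=L$, if for every $\varepsilon>0$, $\lim_n\sum_{k:|x_k-L|\ge\varepsilon}a_{nk}=0$.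 *)

From Stdlib Require Import Reals Lra.
From Coquelicot Require Import Coquelicot.
Open Scope R_scope.

Definition qint (q : R) (m : nat) : R := (1 - q ^ m) / (1 - q).

Fixpoint qfact (q : R) (m : nat) : R :=
  match m with
  | O => 1
  | S m' => qint q (S m') * qfact q m'
  end.

Definition qbinom (q : R) (n k : nat) : R :=
  qfact q n / (qfact q k * qfact q (n - k)).

Fixpoint qprod (q x : R) (m : nat) : R :=
  match m with
  | O => 1
  | S m' => qprod q x m' * (1 - q ^ m' * x)
  end.

Definition pnk (n k : nat) (x q : R) : R :=
  qbinom q n k * x ^ k * qprod q x (n - k).

Fixpoint vmax (n : nat) (g : nat -> R) : R :=
  match n with
  | O => g O
  | S m => Rmax (vmax m g) (g (S m))
  end.

Definition BM (n : nat) (q : R) (f : R -> R) (x : R) : R :=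
  vmax n (fun k => pnk n k x q * f (qint q k / qint q n))
  / vmax n (fun k => pnk n k x q).

Definition nonneg_matrix (a : nat -> nat -> R) : Prop :=
  forall n k, 0 <= a n k.

Definition regular (a : nat -> nat -> R) : Prop :=
  forall (x : nat -> R) (L : R), is_lim_seq x L ->
    (forall n, ex_series (fun k => a n k * x k)) /\
    is_lim_seq (fun n => Series (fun k => a n k * x k)) L.

Definition stA_lim (a : nat -> nat -> R) (x : nat -> R) (L : R) : Prop :=
  forall eps : R, 0 < eps ->
    is_lim_seq
      (fun n => Series (fun k => if Rle_dec eps (Rabs (x k - L)) then a n k else 0))
      0.

Definition cont01 (f : R -> R) : Prop :=
  forall x, 0 <= x <= 1 -> forall eps, 0 < eps -> exists delta, 0 < delta /\
    forall y, 0 <= y <= 1 -> Rabs (y - x) < delta -> Rabs (f y - f x) < eps.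

(* sup_{x in [0,1]} |g x| (as a real; finite in the case of interest) *)
Definition sup01 (g : R -> R) : R :=
  real (Lub_Rbar (fun y => exists x, 0 <= x <= 1 /\ y = Rabs (g x))).

(* From the identity p_{n,k+1}(x) (1 - q^(n-k-1) x) [k+1] = p_{n,k}(x) x [n-k] one gets,
   once q^n >= 1 - eta/4, that the weights p_{n,k}(x) shrink by the factor 1 + eta/2 at
   each step k -> k +- 1 taken away from x while the node [k]/[n] stays at distance
   >= eta/2 from x.  Consecutive nodes are at most 1/[n] apart, so a node at distance
   >= eta from x lies M0 ~ eta [n]/2 such steps out and its weight is at most
   (1 + eta/2)^(-M0) times the largest one.  Only nodes near x matter, so by uniform
   continuity |B f (x) - f x| <= eps for all x as soon as |q^n - 1| and 1/[n] are below
   some delta; the A-density of the n where this fails is then dominated by those of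
   {n | |q_n^n - 1| >= delta} and {n | 1/[n]_{q_n} >= delta}. *)

From Stdlib Require Import Reals Lra Lia Psatz.
From Coquelicot Require Import Coquelicot.
Open Scope R_scope.

Lemma vmax_ge n g k : (k <= n)%nat -> g k <= vmax n g.
Proof.
  induction n as [|n IH]; intros Hk; simpl.
  - replace k with 0%nat by lia. lra.
  - destruct (Nat.eq_dec k (S n)) as [->|Hne]; [apply Rmax_r|].
    eapply Rle_trans; [apply IH; lia | apply Rmax_l].
Qed.

Lemma vmax_attained n g : exists k, (k <= n)%nat /\ vmax n g = g k.
Proof.
  induction n as [|n [k [Hk E]]]; simpl; [exists 0%nat; auto|].
  unfold Rmax. destruct Rle_dec; [exists (S n) | exists k]; auto.
Qed.

Lemma vmax_ratio_close n (P g : nat -> R) (c eps theta M : R) :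
  (forall k, (k <= n)%nat -> 0 <= P k) ->
  (forall k, (k <= n)%nat -> 0 <= g k <= M) ->
  0 < vmax n P -> 0 <= c -> theta < 1 -> theta * M <= eps ->
  (forall k, (k <= n)%nat -> Rabs (g k - c) <= eps \/ P k <= theta * vmax n P) ->
  Rabs (vmax n (fun k => P k * g k) / vmax n P - c) <= eps.
Proof.
  intros HP Hg HD Hc Htheta HM Hdich.
  assert (Hup : vmax n (fun k => P k * g k) <= (c + eps) * vmax n P).
  { destruct (vmax_attained n (fun k => P k * g k)) as [k [Hk ->]].
    pose proof (HP k Hk). pose proof (Hg k Hk). pose proof (vmax_ge n P k Hk).
    destruct (Hdich k Hk) as [Hnear|Hfar].
    - apply Rabs_le_between in Hnear.
      apply Rle_trans with (P k * (c + eps)); [apply Rmult_le_compat_l; lra|].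
      rewrite Rmult_comm. apply Rmult_le_compat_l; lra.
    - apply Rle_trans with (theta * vmax n P * M); [apply Rmult_le_compat; lra|].
      assert (vmax n P * (theta * M) <= vmax n P * (c + eps))
        by (apply Rmult_le_compat_l; lra).
      lra. }
  assert (Hlow : (c - eps) * vmax n P <= vmax n (fun k => P k * g k)).
  { destruct (vmax_attained n P) as [j [Hj Hmax]].
    eapply Rle_trans; [|apply (vmax_ge n (fun k => P k * g k) j Hj)].
    destruct (Hdich j Hj) as [Hnear|Hfar]; [|exfalso; nra].
    apply Rabs_le_between in Hnear. rewrite Hmax. nra. }
  apply Rabs_le. split.
  - apply Rle_div_r in Hlow; lra.
  - apply Rle_div_l in Hup; lra.
Qed.

Lemma le_of_cross_ratio p0 p1 u v r :
  0 < u -> 0 < r -> 0 <= p0 -> p1 * u = p0 * v -> r * v <= u -> p1 <= / r * p0.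
Proof.
  intros Hu Hr Hp0 Heq Hvu.
  apply Rmult_le_reg_r with (r * u); [nra|].
  replace (/ r * p0 * (r * u)) with (p0 * u) by (field; lra).
  replace (p1 * (r * u)) with (r * (p0 * v)) by (rewrite <- Heq; ring).
  nra.
Qed.

Lemma geometric_chain_right (P : nat -> R) rho i j : 0 <= rho ->
  (forall l, (i <= l < i + j)%nat -> P (S l) <= rho * P l) ->
  P (i + j)%nat <= rho ^ j * P i.
Proof.
  intros Hrho Hstep. induction j as [|j IH].
  - rewrite Nat.add_0_r. simpl. lra.
  - rewrite Nat.add_succ_r. simpl. rewrite Rmult_assoc.
    apply Rle_trans with (rho * P (i + j)%nat); [apply Hstep; lia|].
    apply Rmult_le_compat_l; [exact Hrho|]. apply IH. intros l Hl. apply Hstep. lia.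
Qed.

Lemma geometric_chain_left (P : nat -> R) rho i j : 0 <= rho ->
  (forall l, (i <= l < i + j)%nat -> P l <= rho * P (S l)) ->
  P i <= rho ^ j * P (i + j)%nat.
Proof.
  intros Hrho. revert i. induction j as [|j IH]; intros i Hstep.
  - rewrite Nat.add_0_r. simpl. lra.
  - rewrite <- Nat.add_succ_comm. simpl. rewrite Rmult_assoc.
    apply Rle_trans with (rho * P (S i)); [apply Hstep; lia|].
    apply Rmult_le_compat_l; [exact Hrho|]. apply IH. intros l Hl. apply Hstep. lia.
Qed.

Section QInteger.

Variable q : R.
Hypothesis Hq : 0 < q < 1.

Lemma qpow_pos k : 0 < q ^ k.
Proof. apply pow_lt; lra. Qed.

Lemma qpow_le_1 k : q ^ k <= 1.
Proof. rewrite <- (pow1 k). apply pow_incr; lra. Qed.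

Lemma qpow_antimono i n : (i <= n)%nat -> q ^ n <= q ^ i.
Proof.
  intros Hin. replace n with (i + (n - i))%nat by lia. rewrite pow_add.
  pose proof (qpow_pos i). pose proof (qpow_le_1 (n - i)). nra.
Qed.

Lemma qint_0 : qint q 0 = 0.
Proof. unfold qint. simpl. field. lra. Qed.

Lemma qint_add i j : qint q (i + j) = qint q i + q ^ i * qint q j.
Proof. unfold qint. rewrite pow_add. field. lra. Qed.

Lemma qint_S m : qint q (S m) = qint q m + q ^ m.
Proof.
  rewrite <- Nat.add_1_r, qint_add. unfold qint. simpl. field. lra.
Qed.

Lemma qint_nonneg m : 0 <= qint q m.
Proof.
  induction m as [|m IH]; [rewrite qint_0; lra|].
  rewrite qint_S. pose proof (qpow_pos m). lra.
Qed.

Lemma qint_le_INR m : qint q m <= INR m.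
Proof.
  induction m as [|m IH]; [rewrite qint_0; simpl; lra|].
  rewrite qint_S, S_INR. pose proof (qpow_le_1 m). lra.
Qed.

Lemma qint_pos m : (1 <= m)%nat -> 0 < qint q m.
Proof.
  intros Hm. replace m with (S (m - 1)) by lia. rewrite qint_S.
  pose proof (qint_nonneg (m - 1)). pose proof (qpow_pos (m - 1)). lra.
Qed.

Lemma qint_le_add i j : qint q i <= qint q (i + j) <= qint q i + INR j.
Proof.
  rewrite qint_add. pose proof (qpow_pos i). pose proof (qpow_le_1 i).
  pose proof (qint_nonneg j). pose proof (qint_le_INR j). split; nra.
Qed.

Lemma qint_le_qint i n : (i <= n)%nat -> qint q i <= qint q n.
Proof.
  intros Hin. replace n with (i + (n - i))%nat by lia. apply qint_le_add.
Qed.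

Lemma qfact_pos m : 0 < qfact q m.
Proof.
  induction m as [|m IH]; simpl; [lra|].
  apply Rmult_lt_0_compat; [apply qint_pos; lia | exact IH].
Qed.

Lemma qprod_nonneg x m : 0 <= x <= 1 -> 0 <= qprod q x m.
Proof.
  intros Hx. induction m as [|m IH]; simpl; [lra|].
  pose proof (qpow_le_1 m). pose proof (qpow_pos m).
  apply Rmult_le_pos; [exact IH | nra].
Qed.

Lemma qprod_pos x m : 0 <= x < 1 -> 0 < qprod q x m.
Proof.
  intros Hx. induction m as [|m IH]; simpl; [lra|].
  pose proof (qpow_le_1 m). pose proof (qpow_pos m).
  apply Rmult_lt_0_compat; [exact IH | nra].
Qed.

Lemma pnk_nonneg n k x : 0 <= x <= 1 -> 0 <= pnk n k x q.
Proof.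
  intros Hx. unfold pnk, qbinom.
  pose proof (qfact_pos n). pose proof (qfact_pos k). pose proof (qfact_pos (n - k)).
  apply Rmult_le_pos; [apply Rmult_le_pos|].
  - apply Rlt_le, Rdiv_lt_0_compat; [|apply Rmult_lt_0_compat]; assumption.
  - apply pow_le; lra.
  - apply qprod_nonneg; exact Hx.
Qed.

Lemma pnk_succ_ratio i m x :
  pnk (S i + m) (S i) x q * (1 - q ^ m * x) * qint q (S i)
  = pnk (S i + m) i x q * x * qint q (S m).
Proof.
  unfold pnk, qbinom.
  replace (S i + m - S i)%nat with m by lia.
  replace (S i + m - i)%nat with (S m) by lia.
  change (qfact q (S i)) with (qint q (S i) * qfact q i).
  change (qfact q (S m)) with (qint q (S m) * qfact q m).
  change (qprod q x (S m)) with (qprod q x m * (1 - q ^ m * x)).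
  pose proof (qfact_pos i). pose proof (qfact_pos m).
  assert (0 < qint q (S i)) by (apply qint_pos; lia).
  assert (0 < qint q (S m)) by (apply qint_pos; lia).
  simpl pow. field. repeat split; lra.
Qed.

Lemma pnk_0_pos n x : 0 <= x < 1 -> 0 < pnk n 0 x q.
Proof.
  intros Hx. unfold pnk, qbinom. rewrite Nat.sub_0_r. simpl.
  pose proof (qfact_pos n). pose proof (qprod_pos x n Hx).
  replace (qfact q n / (1 * qfact q n) * 1) with 1 by (field; lra). lra.
Qed.

Lemma pnk_diag_1 n : pnk n n 1 q = 1.
Proof.
  unfold pnk, qbinom. rewrite Nat.sub_diag. simpl. rewrite pow1.
  pose proof (qfact_pos n). field. lra.
Qed.

End QInteger.

Lemma vmax_pnk_pos q n x : 0 < q < 1 -> 0 <= x <= 1 -> 0 < vmax n (fun k => pnk n k x q).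
Proof.
  intros Hq Hx. destruct (Rle_lt_dec 1 x) as [H1|H1].
  - replace x with 1 by lra.
    eapply Rlt_le_trans; [|apply (vmax_ge n (fun k => pnk n k 1 q) n); lia].
    rewrite pnk_diag_1 by assumption. lra.
  - eapply Rlt_le_trans; [|apply (vmax_ge n (fun k => pnk n k x q) 0); lia].
    apply pnk_0_pos; lra.
Qed.

Definition node (q : R) (n k : nat) : R := qint q k / qint q n.

Section Nodes.

Variables (q : R) (n : nat).
Hypotheses (Hq : 0 < q < 1) (Hn : (1 <= n)%nat).

Lemma node_mul_qint k : node q n k * qint q n = qint q k.
Proof. unfold node. field. pose proof (qint_pos q Hq n Hn). lra. Qed.

Lemma node_le i j : (i <= j)%nat -> node q n i <= node q n j.
Proof.
  intros Hij. unfold node, Rdiv. apply Rmult_le_compat_r.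
  - left. apply Rinv_0_lt_compat, qint_pos; assumption.
  - apply qint_le_qint; assumption.
Qed.

Lemma node_in_01 k : (k <= n)%nat -> 0 <= node q n k <= 1.
Proof.
  intros Hk. pose proof (qint_pos q Hq n Hn). pose proof (node_mul_qint k).
  pose proof (qint_nonneg q Hq k). pose proof (qint_le_qint q Hq k n Hk). nra.
Qed.

End Nodes.

Lemma node_gap_right x s eta d :
  0 <= x -> s <= 1 -> 0 <= d <= eta / 2 -> x + eta / 2 <= s ->
  x * (1 - s) * (1 + eta / 2) <= (1 - d) * (1 - x) * s.
Proof.
  intros. assert (0 <= (1 - x) * s) by (apply Rmult_le_pos; lra).
  assert (0 <= x * (1 - s)) by (apply Rmult_le_pos; lra).
  assert (0 <= (1 - x) * (1 - s) + x * s) by nra.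
  nra.
Qed.

Lemma node_gap_left x s eta :
  0 <= s -> x <= 1 -> 0 < eta <= 2 -> s <= x - eta / 2 ->
  (1 - (1 - eta / 4) * x) * s * (1 + eta / 2) <= x * (1 - s).
Proof.
  intros. assert (0 <= x * s) by (apply Rmult_le_pos; lra).
  assert (0 <= (1 - x) * s) by (apply Rmult_le_pos; lra).
  nra.
Qed.

Section Localization.

Variables (q x eta : R) (n : nat).
Hypotheses (Hq : 0 < q < 1) (Hx : 0 <= x <= 1) (Heta : 0 < eta <= 2)
  (Hqn : 1 - eta / 4 <= q ^ n) (Hn : (1 <= n)%nat).

Lemma qpow_near_1 k : (k <= n)%nat -> 1 - eta / 4 <= q ^ k.
Proof. intros Hk. pose proof (qpow_antimono q Hq k n Hk). lra. Qed.

Lemma qint_gap_right k m : (S k + m = n)%nat -> x + eta / 2 <= node q n k ->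
  (1 + eta / 2) * (x * qint q (S m)) <= (1 - q ^ m * x) * qint q (S k).
Proof.
  intros Hm Ht.
  pose proof (qint_pos q Hq n Hn). pose proof (node_in_01 q n Hq Hn k ltac:(lia)).
  set (s := node q n k) in *.
  pose proof (qpow_near_1 k ltac:(lia)). pose proof (qpow_le_1 q Hq m).
  pose proof (qint_nonneg q Hq (S m)).
  assert (Htail : (1 - s) * qint q n = q ^ k * qint q (S m)).
  { unfold s. rewrite Rmult_minus_distr_r, (node_mul_qint q n Hq Hn).
    replace n with (k + S m)%nat by lia. rewrite qint_add by assumption. ring. }
  assert (Hscaled : x * (q ^ k * qint q (S m)) * (1 + eta / 2)
                    <= (1 - eta / 4) * (1 - x) * qint q k).
  { pose proof (node_gap_right x s eta (eta / 4) ltac:(lra) ltac:(lra) ltac:(lra) Ht) as Hg.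
    rewrite <- Htail, <- (node_mul_qint q n Hq Hn k). fold s.
    apply Rmult_le_compat_r with (r := qint q n) in Hg; [nra | lra]. }
  assert (x * (1 + eta / 2) * ((1 - eta / 4) * qint q (S m))
          <= x * (1 + eta / 2) * (q ^ k * qint q (S m)))
    by (apply Rmult_le_compat_l; nra).
  assert ((1 - x) * qint q k <= (1 - q ^ m * x) * qint q (S k))
    by (apply Rmult_le_compat; [lra | apply qint_nonneg | nra | apply qint_le_qint]; auto).
  nra.
Qed.

Lemma qint_gap_left k m : (S k + m = n)%nat -> node q n (S k) <= x - eta / 2 ->
  (1 + eta / 2) * ((1 - q ^ m * x) * qint q (S k)) <= x * qint q (S m).
Proof.
  intros Hm Ht.
  pose proof (qint_pos q Hq n Hn). pose proof (node_in_01 q n Hq Hn (S k) ltac:(lia)).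
  set (s := node q n (S k)) in *.
  pose proof (qpow_near_1 m ltac:(lia)). pose proof (qpow_le_1 q Hq m).
  assert (Htail : (1 - s) * qint q n <= qint q (S m)).
  { unfold s. rewrite Rmult_minus_distr_r, (node_mul_qint q n Hq Hn), <- Hm, qint_add,
      (qint_S q Hq m) by assumption.
    pose proof (qint_nonneg q Hq m). pose proof (qpow_le_1 q Hq (S k)).
    pose proof (qpow_pos q Hq m). nra. }
  pose proof (node_gap_left x s eta ltac:(lra) ltac:(lra) Heta Ht) as Hg.
  rewrite <- (node_mul_qint q n Hq Hn (S k)). fold s.
  assert (Hqmx : 0 <= 1 - q ^ m * x <= 1 - (1 - eta / 4) * x) by nra.
  assert ((1 + eta / 2) * ((1 - q ^ m * x) * (s * qint q n))
          <= (1 - (1 - eta / 4) * x) * s * (1 + eta / 2) * qint q n).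
  { replace ((1 - (1 - eta / 4) * x) * s * (1 + eta / 2) * qint q n)
      with ((1 + eta / 2) * ((1 - (1 - eta / 4) * x) * (s * qint q n))) by ring.
    apply Rmult_le_compat_l; [lra|]. apply Rmult_le_compat_r; [nra | lra]. }
  assert ((1 - (1 - eta / 4) * x) * s * (1 + eta / 2) * qint q n
          <= x * ((1 - s) * qint q n))
    by (rewrite <- Rmult_assoc; apply Rmult_le_compat_r; lra).
  assert (x * ((1 - s) * qint q n) <= x * qint q (S m)) by (apply Rmult_le_compat_l; lra).
  lra.
Qed.

Lemma pnk_step_right k : (k < n)%nat -> x + eta / 2 <= node q n k ->
  pnk n (S k) x q <= / (1 + eta / 2) * pnk n k x q.
Proof.
  intros Hk Ht. destruct (Nat.le_exists_sub (S k) n Hk) as [m [Hm _]].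
  assert (Hkm : (S k + m = n)%nat) by lia.
  pose proof (node_in_01 q n Hq Hn k ltac:(lia)).
  apply le_of_cross_ratio with ((1 - q ^ m * x) * qint q (S k)) (x * qint q (S m)).
  - pose proof (qpow_le_1 q Hq m).
    apply Rmult_lt_0_compat; [nra | apply (qint_pos q Hq); lia].
  - lra.
  - apply pnk_nonneg; assumption.
  - rewrite <- Hkm, <- Rmult_assoc, pnk_succ_ratio by assumption. ring.
  - apply qint_gap_right; assumption.
Qed.

Lemma pnk_step_left k : (k < n)%nat -> node q n (S k) <= x - eta / 2 ->
  pnk n k x q <= / (1 + eta / 2) * pnk n (S k) x q.
Proof.
  intros Hk Ht. destruct (Nat.le_exists_sub (S k) n Hk) as [m [Hm _]].
  assert (Hkm : (S k + m = n)%nat) by lia.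
  pose proof (node_in_01 q n Hq Hn (S k) ltac:(lia)).
  apply le_of_cross_ratio with (x * qint q (S m)) ((1 - q ^ m * x) * qint q (S k)).
  - apply Rmult_lt_0_compat; [lra | apply (qint_pos q Hq); lia].
  - lra.
  - apply pnk_nonneg; assumption.
  - rewrite <- Hkm, <- Rmult_assoc, <- pnk_succ_ratio by assumption. ring.
  - apply qint_gap_left; assumption.
Qed.

Variable M0 : nat.
Hypothesis HM0 : INR M0 <= eta / 2 * qint q n.

Lemma pnk_far_right k : (k <= n)%nat -> x + eta <= node q n k ->
  pnk n k x q <= (/ (1 + eta / 2)) ^ M0 * pnk n (k - M0) x q.
Proof.
  intros Hk Ht. pose proof (qint_pos q Hq n Hn).
  pose proof (node_mul_qint q n Hq Hn k) as Hbk.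
  assert (HM0k : (M0 <= k)%nat).
  { apply INR_le. pose proof (qint_le_INR q Hq k). nra. }
  assert (Hstart : x + eta / 2 <= node q n (k - M0)%nat).
  { pose proof (node_mul_qint q n Hq Hn (k - M0)) as Hb.
    pose proof (qint_le_add q Hq (k - M0) M0). replace (k - M0 + M0)%nat with k in * by lia.
    nra. }
  replace k with (k - M0 + M0)%nat at 1 by lia.
  apply (geometric_chain_right (fun j => pnk n j x q)); [left; apply Rinv_0_lt_compat; lra|].
  intros l Hl. apply pnk_step_right; try assumption; [lia|].
  pose proof (node_le q n Hq Hn (k - M0) l ltac:(lia)). lra.
Qed.

Lemma pnk_far_left k : (k <= n)%nat -> node q n k <= x - eta ->
  (k + M0 <= n)%nat /\ pnk n k x q <= (/ (1 + eta / 2)) ^ M0 * pnk n (k + M0) x q.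
Proof.
  intros Hk Ht. pose proof (qint_pos q Hq n Hn).
  pose proof (node_mul_qint q n Hq Hn k) as Hbk.
  assert (HM0k : (k + M0 <= n)%nat).
  { pose proof (qint_le_add q Hq k (n - k)). replace (k + (n - k))%nat with n in * by lia.
    assert (Hgap : INR M0 <= INR (n - k)) by nra. apply INR_le in Hgap. lia. }
  split; [exact HM0k|].
  assert (Hend : node q n (k + M0)%nat <= x - eta / 2).
  { pose proof (node_mul_qint q n Hq Hn (k + M0)) as Hb.
    pose proof (qint_le_add q Hq k M0). nra. }
  apply (geometric_chain_left (fun j => pnk n j x q)); [left; apply Rinv_0_lt_compat; lra|].
  intros l Hl. apply pnk_step_left; try assumption; [lia|].
  pose proof (node_le q n Hq Hn (S l) (k + M0) ltac:(lia)). lra.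
Qed.

Lemma pnk_far_le k : (k <= n)%nat -> eta <= Rabs (node q n k - x) ->
  pnk n k x q <= (/ (1 + eta / 2)) ^ M0 * vmax n (fun j => pnk n j x q).
Proof.
  intros Hk Hfar.
  assert (0 <= (/ (1 + eta / 2)) ^ M0) by (apply pow_le, Rlt_le, Rinv_0_lt_compat; lra).
  destruct (Rle_lt_dec (x + eta) (node q n k)) as [Hright|Hleft].
  - eapply Rle_trans; [apply pnk_far_right; assumption|].
    apply Rmult_le_compat_l; [assumption|].
    apply (vmax_ge n (fun j => pnk n j x q)). lia.
  - assert (Hleft' : node q n k <= x - eta)
      by (unfold Rabs in Hfar; destruct Rcase_abs in Hfar; lra).
    destruct (pnk_far_left k Hk Hleft') as [HkM HPk].
    eapply Rle_trans; [exact HPk|].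
    apply Rmult_le_compat_l; [assumption|].
    apply (vmax_ge n (fun j => pnk n j x q)). exact HkM.
Qed.

End Localization.

Definition clamp01 (y : R) : R := Rmax 0 (Rmin 1 y).

Lemma clamp01_id y : 0 <= y <= 1 -> clamp01 y = y.
Proof. intros. unfold clamp01, Rmax, Rmin. repeat destruct Rle_dec; lra. Qed.

Lemma clamp01_in y : 0 <= clamp01 y <= 1.
Proof. unfold clamp01, Rmax, Rmin. repeat destruct Rle_dec; lra. Qed.

Lemma clamp01_dist y c : 0 <= c <= 1 -> Rabs (clamp01 y - c) <= Rabs (y - c).
Proof.
  intros. unfold clamp01, Rmax, Rmin, Rabs.
  repeat destruct Rle_dec; repeat destruct Rcase_abs; lra.
Qed.

Lemma continuity_pt_clamp01 f c :
  cont01 f -> 0 <= c <= 1 -> continuity_pt (fun y => f (clamp01 y)) c.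
Proof.
  intros Hf Hc eps He. destruct (Hf c Hc eps He) as [d [Hd Hfd]].
  exists d. split; [exact Hd|]. intros y [_ Hy]. simpl in *. unfold Rdist in *.
  rewrite (clamp01_id c Hc). apply Hfd; [apply clamp01_in|].
  pose proof (clamp01_dist y c Hc). lra.
Qed.

Lemma cont01_bounded f : cont01 f -> exists M, forall x, 0 <= x <= 1 -> f x <= M.
Proof.
  intros Hf.
  destruct (continuity_ab_maj (fun y => f (clamp01 y)) 0 1 ltac:(lra)
              (fun c Hc => continuity_pt_clamp01 f c Hf Hc)) as [m [Hm _]].
  exists (f (clamp01 m)). intros x Hx. rewrite <- (clamp01_id x Hx). apply Hm, Hx.
Qed.

Lemma cont01_uniform f : cont01 f -> forall eps, 0 < eps -> exists d, 0 < d /\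
  forall x y, 0 <= x <= 1 -> 0 <= y <= 1 -> Rabs (x - y) < d -> Rabs (f x - f y) < eps.
Proof.
  intros Hf eps He.
  destruct (Heine (fun y => f (clamp01 y)) (fun c => 0 <= c <= 1) (compact_P3 0 1)
              (fun c Hc => continuity_pt_clamp01 f c Hf Hc) (mkposreal eps He)) as [d Hd].
  exists d. split; [apply cond_pos|]. intros x y Hx Hy Hxy.
  rewrite <- (clamp01_id x Hx), <- (clamp01_id y Hy). apply Hd; assumption.
Qed.

Lemma BM_close f (M eps theta eta : R) (n M0 : nat) (q x : R) :
  0 < q < 1 -> 0 <= x <= 1 -> (1 <= n)%nat -> 0 < eta <= 2 ->
  1 - eta / 4 <= q ^ n -> INR M0 <= eta / 2 * qint q n ->
  (/ (1 + eta / 2)) ^ M0 <= theta -> theta < 1 -> theta * M <= eps ->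
  (forall y, 0 <= y <= 1 -> 0 <= f y <= M) ->
  (forall y, 0 <= y <= 1 -> Rabs (y - x) < eta -> Rabs (f y - f x) <= eps) ->
  Rabs (BM n q f x - f x) <= eps.
Proof.
  intros Hq Hx Hn Heta Hqn HM0 Hrho Htheta HthetaM Hbound Hnear.
  pose proof (vmax_pnk_pos q n x Hq Hx) as Hmax.
  apply vmax_ratio_close with (g := fun k => f (node q n k)) (theta := theta) (M := M).
  - intros k _. apply pnk_nonneg; assumption.
  - intros k Hk. apply Hbound, node_in_01; assumption.
  - exact Hmax.
  - apply Hbound, Hx.
  - exact Htheta.
  - exact HthetaM.
  - intros k Hk. pose proof (node_in_01 q n Hq Hn k Hk).
    destruct (Rlt_dec (Rabs (node q n k - x)) eta) as [Hk_near|Hk_far]; [left; auto|right].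
    apply Rnot_lt_le in Hk_far.
    eapply Rle_trans; [exact (pnk_far_le q x eta n Hq Hx Heta Hqn Hn M0 HM0 k Hk Hk_far)|].
    apply Rmult_le_compat_r; lra.
Qed.

Lemma BM_uniform_approx f :
  (forall x, 0 <= x <= 1 -> 0 <= f x) -> cont01 f ->
  forall eps, 0 < eps -> exists delta, 0 < delta /\
  forall n q, (1 <= n)%nat -> 0 < q < 1 -> 1 - delta < q ^ n -> / qint q n < delta ->
  forall x, 0 <= x <= 1 -> Rabs (BM n q f x - f x) <= eps.
Proof.
  intros Hfpos Hf eps He.
  destruct (cont01_bounded f Hf) as [M HM].
  assert (HM_pos : 0 <= M)
    by (pose proof (Hfpos 0 ltac:(lra)); pose proof (HM 0 ltac:(lra)); lra).
  destruct (cont01_uniform f Hf eps He) as [d [Hd Hunif]].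
  set (eta := Rmin d 1).
  assert (Heta : 0 < eta <= 1) by (split; [apply Rmin_pos | apply Rmin_r]; lra).
  assert (Hetad : eta <= d) by apply Rmin_l.
  set (theta := Rmin (eps / (M + 1)) (1 / 2)).
  assert (Htheta : 0 < theta <= 1 / 2)
    by (split; [apply Rmin_pos; [apply Rdiv_lt_0_compat|] | apply Rmin_r]; lra).
  assert (HthetaM : theta * (M + 1) <= eps) by (apply Rle_div_r; [lra | apply Rmin_l]).
  assert (Hrho : 0 < / (1 + eta / 2) < 1)
    by (split; [apply Rinv_0_lt_compat | rewrite <- Rinv_1; apply Rinv_lt_contravar]; lra).
  destruct (pow_lt_1_zero (/ (1 + eta / 2)) ltac:(rewrite Rabs_pos_eq; lra) theta
              ltac:(lra)) as [M0 HM0].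
  specialize (HM0 M0 (le_n _)). rewrite Rabs_pos_eq in HM0 by (apply pow_le; lra).
  pose proof (pos_INR M0).
  (* This delta gives both q^n >= 1 - eta/4 and M0 <= eta [n] / 2. *)
  exists (eta / (4 * (INR M0 + 1))). split; [apply Rdiv_lt_0_compat; lra|].
  intros n q Hn Hq Hqn Hqi x Hx.
  pose proof (qint_pos q Hq n Hn).
  assert (Hdelta : eta / (4 * (INR M0 + 1)) <= eta / 4).
  { apply Rmult_le_compat_l; [lra|]. apply Rinv_le_contravar; lra. }
  assert (Hsize : INR M0 <= eta / 2 * qint q n).
  { assert (1 < eta / (4 * (INR M0 + 1)) * qint q n).
    { apply Rmult_lt_compat_r with (r := qint q n) in Hqi; [|lra].
      rewrite Rinv_l in Hqi; lra. }
    assert (eta / (4 * (INR M0 + 1)) * qint q n * (INR M0 + 1) = eta / 4 * qint q n)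
      by (field; lra).
    nra. }
  apply (BM_close f (M + 1) eps theta eta n M0); try assumption; try lra.
  - intros y Hy. pose proof (Hfpos y Hy). pose proof (HM y Hy). lra.
  - intros y Hy Hyx. apply Rlt_le, Hunif; [assumption | assumption | lra].
Qed.

Lemma sup01_bound g c :
  0 <= c -> (forall x, 0 <= x <= 1 -> Rabs (g x) <= c) -> 0 <= sup01 g <= c.
Proof.
  intros Hc Hg. unfold sup01.
  set (E := fun y => exists x, 0 <= x <= 1 /\ y = Rabs (g x)).
  assert (HE0 : E (Rabs (g 0))) by (exists 0; split; [lra | reflexivity]).
  assert (HEc : forall y, E y -> Rbar_le y c) by (intros y [x [Hx ->]]; apply Hg, Hx).
  destruct (Lub_Rbar_correct E) as [Hub Hlub].
  specialize (Hub _ HE0). specialize (Hlub c HEc).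
  destruct (Lub_Rbar E) as [r| |]; simpl in *; try contradiction.
  pose proof (Rabs_pos (g 0)). lra.
Qed.

Lemma Series_null_le_add (v u w : nat -> nat -> R) :
  (forall n k, 0 <= v n k <= u n k + w n k) ->
  (forall n, ex_series (u n)) -> (forall n, ex_series (w n)) ->
  is_lim_seq (fun n => Series (u n)) 0 -> is_lim_seq (fun n => Series (w n)) 0 ->
  is_lim_seq (fun n => Series (v n)) 0.
Proof.
  intros Hv Hu Hw Hlu Hlw.
  apply is_lim_seq_le_le with (fun _ => 0) (fun n => Series (u n) + Series (w n)).
  - intros n. rewrite <- Series_plus by auto.
    assert (Hex : ex_series (fun k => u n k + w n k))
      by exact (ex_series_plus _ _ (Hu n) (Hw n)).
    split.
    + rewrite <- (Rmult_0_l (Series (v n))), <- Series_scal_l.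
      apply Series_le; [intros k; pose proof (Hv n k); lra|].
      apply (ex_series_le (v n) (fun k => u n k + w n k)); [|exact Hex].
      intros k. pose proof (Hv n k). rewrite Rabs_pos_eq; lra.
    + apply Series_le; [apply Hv | exact Hex].
  - apply is_lim_seq_const.
  - replace (Finite 0) with (Rbar_plus 0 0) by (simpl; f_equal; ring).
    apply is_lim_seq_plus'; assumption.
Qed.

Definition stA_term (a : nat -> nat -> R) (y : nat -> R) (L r : R) (n k : nat) : R :=
  if Rle_dec r (Rabs (y k - L)) then a n k else 0.

Section Statistical.

Variable a : nat -> nat -> R.
Hypotheses (HA0 : nonneg_matrix a) (HAreg : regular a).

Lemma stA_term_bounds y L r n k : 0 <= stA_term a y L r n k <= a n k.
Proof. unfold stA_term. pose proof (HA0 n k). destruct Rle_dec; lra. Qed.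

Lemma stA_term_on y L r n k : r <= Rabs (y k - L) -> stA_term a y L r n k = a n k.
Proof. intros H. unfold stA_term. destruct Rle_dec; [reflexivity | contradiction]. Qed.

Lemma stA_term_off y L r n k : Rabs (y k - L) < r -> stA_term a y L r n k = 0.
Proof. intros H. unfold stA_term. destruct Rle_dec; [lra | reflexivity]. Qed.

Lemma ex_series_stA_term y L r n : ex_series (stA_term a y L r n).
Proof.
  destruct (HAreg (fun _ => 1) 1 (is_lim_seq_const 1)) as [Hex _].
  apply (ex_series_le (stA_term a y L r n) (fun k => a n k * 1)); [|apply Hex].
  intros k. pose proof (stA_term_bounds y L r n k). rewrite Rabs_pos_eq; lra.
Qed.

(* Control is only required for k > 0: at n = 0 the condition / [0]_q < delta holds
   vacuously (Rocq's / 0 = 0) while B_0 f = f 0.  A single column of a regular matrix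
   has vanishing weight, so one index can be ignored. *)
Lemma stA_lim_of_control (u w v : nat -> R) (lu lw l : R) :
  stA_lim a u lu -> stA_lim a w lw ->
  (forall eps, 0 < eps -> exists d, 0 < d /\ forall k, (0 < k)%nat ->
     Rabs (u k - lu) < d -> Rabs (w k - lw) < d -> Rabs (v k - l) < eps) ->
  stA_lim a v l.
Proof.
  intros Hu Hw Hctrl eps He. destruct (Hctrl eps He) as [d [Hd Hk]].
  set (e := fun k => if Nat.eq_dec k 0 then 1 else 0).
  assert (He0 : is_lim_seq e 0).
  { apply is_lim_seq_incr_1, is_lim_seq_ext with (fun _ => 0); [reflexivity|].
    apply is_lim_seq_const. }
  destruct (HAreg e 0 He0) as [Hex_col Hcol].
  change (is_lim_seq (fun n => Series (stA_term a v l eps n)) 0).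
  apply (Series_null_le_add _ (fun n k => a n k * e k)
           (fun n k => stA_term a u lu d n k + stA_term a w lw d n k));
    [| exact Hex_col | | exact Hcol |].
  - intros n k. pose proof (stA_term_bounds v l eps n k).
    pose proof (stA_term_bounds u lu d n k). pose proof (stA_term_bounds w lw d n k).
    split; [lra|].
    assert (Hek : 0 <= a n k * e k)
      by (unfold e; destruct Nat.eq_dec; pose proof (HA0 n k); lra).
    destruct (Nat.eq_dec k 0) as [->|Hk0].
    { replace (e 0%nat) with 1 by reflexivity. lra. }
    destruct (Rle_lt_dec d (Rabs (u k - lu))) as [Hu_far|Hu_near].
    { rewrite (stA_term_on u) by exact Hu_far. lra. }
    destruct (Rle_lt_dec d (Rabs (w k - lw))) as [Hw_far|Hw_near].
    { rewrite (stA_term_on w) by exact Hw_far. lra. }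
    rewrite (stA_term_off v) by (apply Hk; [lia | assumption | assumption]). lra.
  - intros n. exact (ex_series_plus _ _ (ex_series_stA_term u lu d n)
                                         (ex_series_stA_term w lw d n)).
  - apply (Series_null_le_add _ (stA_term a u lu d) (stA_term a w lw d)).
    + intros n k. pose proof (stA_term_bounds u lu d n k).
      pose proof (stA_term_bounds w lw d n k). lra.
    + apply ex_series_stA_term.
    + apply ex_series_stA_term.
    + exact (Hu d Hd).
    + exact (Hw d Hd).
Qed.

End Statistical.

Theorem theorem8 (a : nat -> nat -> R) (q : nat -> R)
  (HA0 : nonneg_matrix a) (HAreg : regular a)
  (Hq : forall n, 0 < q n < 1)
  (Hqn : stA_lim a (fun n => q n ^ n) 1)
  (Hqint : stA_lim a (fun n => / qint (q n) n) 0)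
  (f : R -> R) (Hfpos : forall x, 0 <= x <= 1 -> 0 <= f x) (Hf : cont01 f) :
  stA_lim a (fun n => sup01 (fun x => BM n (q n) f x - f x)) 0.
Proof.
  apply (stA_lim_of_control a HA0 HAreg _ _ _ _ _ _ Hqn Hqint).
  intros eps He.
  destruct (BM_uniform_approx f Hfpos Hf (eps / 2) ltac:(lra)) as [d [Hd Happrox]].
  exists d. split; [exact Hd|]. intros n Hn Hqn_close Hqint_close.
  apply Rabs_lt_between in Hqn_close. rewrite Rminus_0_r in Hqint_close.
  assert (Hsup : 0 <= sup01 (fun x => BM n (q n) f x - f x) <= eps / 2).
  { apply sup01_bound; [lra|]. intros x Hx.
    apply Happrox; [lia | apply Hq | lra | | exact Hx].
    pose proof (Rle_abs (/ qint (q n) n)). lra. }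
  rewrite Rminus_0_r, Rabs_pos_eq; lra.
Qed.
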